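(* Let $f:\{0,1\}^n\to\mathbb{R}$, $c$ in the image of $f$, and $I\subset[1..n]$. Let $Z=\{z\in\{0,1\}^n\mid z_i=0 \text{ for all } i\notin I\}$. Assume that for all $y\in\{0,1\}^n$ with $f(y)\le c$ we have $f(y\oplus z)=f(y)$ for all $z\in Z$. Then for any $(\mu+\lambda)$-elitist unary unbiased black-box algorithm optimizing $f$, any $t\ge 0$ and any $k\in[1..\mu]$, conditioned on the event $E_{t,c}=\{\max_{j\in[1..\mu]} f(x^{(t,j)})=c\}$, the bits $x^{(t,k)}_i$, $i\in I$, are mutually independent, independent of all other bits of $x^{(t,k)}$, and uniformly distributed in $\{0,1\}$.
   Context: A unary unbiased variation operator $V$ assigns to each $x\in\{0,1\}^n$ a probability distribution $V(x)$ on $\{0,1\}^n$ such that for all $x,y,z$, $\Pr[y=V(x)]=\Pr[y\oplus z=V(x\oplus z)]$, and for all permutations $\sigma$ of $[1..n]$, $\Pr[y=V(x)]=\Pr[\sigma(y)=V(\sigma(x))]$, where $\sigma(x)=(x_{\sigma(1)},\dots,x_{\sigma(n)})$. A $(\mu+\lambda)$-elitist unary unbiased black-box algorithm: generate $\mu$ search points $x^{(0,1)},\dots,x^{(0,\mu)}$ independently and uniformly at random and let $X$ be this population. In each iteration $t=1,2,\dots$, choose $\lambda$ individuals $p_1,\dots,p_\lambda$ from $X$ and $\lambda$ unary unbiased variation operators $V_1,\dots,V_\lambda$, sample $q_j\sim V_j(p_j)$, and let the new $X$ be a selection of $\mu$ best individuals of $X\cup\{q_1,\dots,q_\lambda\}$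 (ties broken arbitrarily). All choices (parents, operators, selection among ties) may depend only on the fitness values of the search points generated so far. The population after iteration $t$ is denoted $x^{(t,1)},\dots,x^{(t,\mu)}$. *)

From HB Require Import structures.
From mathcomp Require Import all_boot all_order all_algebra all_fingroup.
From mathcomp Require Import reals.
Set Implicit Arguments. Unset Strict Implicit. Unset Printing Implicit Defensive.
Import Order.TTheory GRing.Theory Num.Theory.
Local Open Scope ring_scope.

Section EA.
Variables (R : realType) (n : nat).

Definition bits := {ffun 'I_n -> bool}.
Definition bxor (x z : bits) : bits := [ffun i => x i (+) z i].
Definition bperm (s : 'S_n) (x : bits) : bits := [ffun i => x (s i)].

(* V x y = Pr[y = V(x)] : a unary unbiased variation operator *)
Definition unbiased_op (V : bits -> bits -> R) : Prop :=
  [/\ forall x y, 0 <= V x y,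
      forall x, \sum_(y : bits) V x y = 1,
      forall x y z, V x y = V (bxor x z) (bxor y z) &
      forall (s : 'S_n) x y, V x y = V (bperm s x) (bperm s y)].

Variables (mu lam : nat).

(* A (deterministic, given its random seed) (mu+lam)-elitist unary unbiased
   algorithm.  All choices depend only on the history [h : seq R] of fitness
   values of all search points generated so far (in order of generation).
   - par h j : the population slot of the parent of the j-th offspring
   - op  h j : the variation operator used for the j-th offspring
   - sel h w : the selection; w is the fitness vector of X \cup {q_1..q_lam}
     (slots 0..mu-1 = current population, mu.. = offspring), which is itself a
     function of the history; new slot j receives combined element sel h w j. *)
Record elitist_alg := EliAlg {
  par : seq R -> 'I_lam -> 'I_mu ;
  op  : seq R -> 'I_lam -> bits -> bits -> R ;
  sel : seq R -> ('I_(mu + lam) -> R) -> 'I_mu -> 'I_(mu + lam) }.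

Definition valid_alg (A : elitist_alg) : Prop :=
  (forall h j, unbiased_op (op A h j)) /\
  (forall h (w : 'I_(mu + lam) -> R),
      injective (sel A h w) /\
      forall (i : 'I_mu) (k : 'I_(mu + lam)),
        k \notin codom (sel A h w) -> w k <= w (sel A h w i)).

Definition comb (pop : {ffun 'I_mu -> bits}) (q : {ffun 'I_lam -> bits})
    (i : 'I_(mu + lam)) : bits :=
  match split i with inl j => pop j | inr k => q k end.

Variable f : bits -> R.

(* state = (population, fitness history, probability weight of the trajectory) *)
Definition step (A : elitist_alg) (st : {ffun 'I_mu -> bits} * seq R * R)
    (q : {ffun 'I_lam -> bits}) : {ffun 'I_mu -> bits} * seq R * R :=
  let: (pop, h, w) := st in
  let w' := w * \prod_(j < lam) op A h j (pop (par A h j)) (q j) in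
  let h' := h ++ [seq f (q k) | k <- enum 'I_lam] in
  let pop' := [ffun j => comb pop q (sel A h (fun i => f (comb pop q i)) j)] in
  (pop', h', w').

(* trajectory: initial population x0 (uniform, independent) and offspring qs *)
Definition run (A : elitist_alg) (x0 : {ffun 'I_mu -> bits})
    (qs : seq {ffun 'I_lam -> bits}) :=
  foldl (step A) (x0, [seq f (x0 j) | j <- enum 'I_mu],
                  (((2%:R : R)^-1) ^+ n) ^+ mu) qs.

(* Pr[ P(population after iteration t) ], for a randomized algorithm given as a
   random seed om ~ pw choosing a deterministic-choice algorithm A om *)
Definition prob_pop (Omega : finType) (pw : Omega -> R)
    (A : Omega -> elitist_alg) (t : nat) (P : {ffun 'I_mu -> bits} -> bool) : R :=
  \sum_(om : Omega) pw om *
    \sum_(x0 : {ffun 'I_mu -> bits}) \sum_(qs : t.-tuple {ffun 'I_lam -> bits})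
      (let st := run (A om) x0 qs in if P st.1.1 then st.2 else 0).

Definition cond (Pr : ({ffun 'I_mu -> bits} -> bool) -> R)
    (P E : {ffun 'I_mu -> bits} -> bool) : R :=
  Pr (fun X => P X && E X) / Pr E.

Definition max_fit_is (c : R) (X : {ffun 'I_mu -> bits}) : bool :=
  [forall j, f (X j) <= c] && [exists j, f (X j) == c].

End EA.

From HB Require Import structures.
From mathcomp Require Import all_boot all_order all_algebra all_fingroup.
From mathcomp Require Import reals.
From mathcomp Require Import boolp.
Set Implicit Arguments. Unset Strict Implicit. Unset Printing Implicit Defensive.
Import Order.TTheory GRing.Theory Num.Theory.
Local Open Scope ring_scope.

(* Fix z with z_i = 0 outside I.  Along a trajectory (initial population and
   offspring) in which every fitness value is at most c, xoring z into every
   search point changes no fitness value, hence none of the algorithm's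
   choices, and by unbiasedness no operator probability either; the resulting
   trajectory is equally likely and ends in the final population xor z.  A
   trajectory that ever produces a point of fitness above c keeps such a point
   by elitism, so it never ends in E_{t,c}.  Hence Pr[P(X) & E] = Pr[P(X xor z)
   & E] for every event P: flipping a single bit i in I shows that it is
   uniform, and summing over all 2^|I| such z gives the product formula. *)

Section Xor.
Variable n : nat.
Implicit Types x y z : bits n.

Lemma bxorC x z : bxor x z = bxor z x.
Proof. by apply/ffunP => i; rewrite !ffunE addbC. Qed.

Lemma bxorK z : involutive ((@bxor n)^~ z).
Proof. by move=> x; apply/ffunP => i; rewrite !ffunE addbK. Qed.

Lemma bxor_eq x y z : (bxor y z == x) = (y == bxor x z).
Proof. by apply/eqP/eqP => [<-|->]; rewrite bxorK. Qed.

Definition xor_all (T : finType) z (X : {ffun T -> bits n}) : {ffun T -> bits n} :=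
  [ffun j => bxor (X j) z].

Lemma xor_allK (T : finType) z : involutive (@xor_all T z).
Proof. by move=> X; apply/ffunP => j; rewrite !ffunE bxorK. Qed.

Lemma pffun_on_falseP (I : {set 'I_n}) z :
  reflect (forall i, i \notin I -> z i = false) (z \in pffun_on false (mem I) predT).
Proof.
apply: (iffP pffun_onP) => [[/subsetP supp _] i | supp].
  by apply: contraNF => zi; have := supp i; rewrite supportE zi; apply.
by split=> [|_ _ //]; apply/subsetP => i; rewrite supportE; apply: contraR => /supp ->.
Qed.

End Xor.

Section Elitism.
Variables (R : realType) (n mu lam : nat) (f : bits n -> R) (c : R).

Definition below (T : finType) (X : {ffun T -> bits n}) := [forall j, f (X j) <= c].

Section Comb.
Variables (pop : {ffun 'I_mu -> bits n}) (q : {ffun 'I_lam -> bits n}).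

Lemma comb_lshift j : comb pop q (lshift lam j) = pop j.
Proof. by rewrite /comb -[lshift _ _]/(unsplit (inl j)) unsplitK. Qed.

Lemma comb_rshift j : comb pop q (rshift mu j) = q j.
Proof. by rewrite /comb -[rshift _ _]/(unsplit (inr j)) unsplitK. Qed.

Lemma below_comb : [forall m, f (comb pop q m) <= c] = below pop && below q.
Proof.
apply/forallP/andP => [le_c | [/forallP pop_le /forallP q_le] m].
  by split; apply/forallP => j; rewrite -?comb_lshift -?comb_rshift.
by rewrite /comb; case: split.
Qed.

End Comb.

(* [j0] witnesses a nonempty population: an unselected point is dominated by
   any selected one, but for mu = 0 nothing is kept. *)
Variables (A : elitist_alg R n mu lam) (j0 : 'I_mu).
Hypothesis A_valid : valid_alg A.

Lemma forall_le_sel h (w : 'I_(mu + lam) -> R) :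
  [forall j, w (sel A h w j) <= c] = [forall m, w m <= c].
Proof.
apply/forallP/forallP => [sel_le_c m | le_c j]; last exact: le_c.
have [_ /(_ h w) [_ sel_max]] := A_valid.
have [/codomP [j ->] | m_out] := boolP (m \in codom (sel A h w)); first exact: sel_le_c.
exact: le_trans (sel_max j0 m m_out) (sel_le_c j0).
Qed.

Lemma below_step st q : below (step f A st q).1.1 = below st.1.1 && below q.
Proof.
case: st => [[pop h] w] /=; rewrite -below_comb -(forall_le_sel h).
by apply: eq_forallb => j; rewrite ffunE.
Qed.

Lemma below_foldl st qs :
  below (foldl (step f A) st qs).1.1 = below st.1.1 && all (@below _) qs.
Proof. by elim: qs st => [|q qs IH] st /=; rewrite ?andbT // IH below_step andbA. Qed.

Lemma below_run x0 qs : below (run f A x0 qs).1.1 = below x0 && all (@below _) qs.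
Proof. exact: below_foldl. Qed.

End Elitism.

Arguments below {R n} f c {T} X.

Section Probability.
Variables (R : realType) (n mu lam : nat) (f : bits n -> R).
Variables (Omega : finType) (pw : Omega -> R) (A : Omega -> elitist_alg R n mu lam) (t : nat).

Lemma prob_pop_sum (J : finType) (D : pred J) (P : J -> pred {ffun 'I_mu -> bits n})
    (Q : pred {ffun 'I_mu -> bits n}) :
  (forall X, (\sum_(j | D j) P j X)%N = Q X) ->
  prob_pop f pw A t Q = \sum_(j | D j) prob_pop f pw A t (P j).
Proof.
move=> sum_P; rewrite /prob_pop [RHS]exchange_big; apply: eq_bigr => om _.
rewrite -mulr_sumr; congr (_ * _); rewrite [RHS]exchange_big; apply: eq_bigr => x0 _.
rewrite [RHS]exchange_big; apply: eq_bigr => qs _ /=.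
have weightE (B : bool) w : (if B then w else 0) = B%:R * w by case: B; rewrite (mul1r, mul0r).
by rewrite weightE -sum_P natr_sum mulr_suml; apply: eq_bigr => j _; rewrite weightE.
Qed.

End Probability.

Section Symmetry.
Variables (R : realType) (n mu lam : nat) (f : bits n -> R) (c : R) (I : {set 'I_n}).
Hypothesis f_bxor : forall y : bits n, f y <= c ->
  forall z : bits n, (forall i, i \notin I -> z i = false) -> f (bxor y z) = f y.
Variable z : bits n.
Hypothesis z_supp : forall i, i \notin I -> z i = false.

Lemma le_f_bxor y : (f (bxor y z) <= c) = (f y <= c).
Proof.
apply/idP/idP => [le_c | le_c]; last by rewrite f_bxor.
by rewrite -[y](bxorK z) f_bxor.
Qed.

Lemma below_xor (T : finType) (X : {ffun T -> bits n}) :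
  below f c (xor_all z X) = below f c X.
Proof. by apply: eq_forallb => j; rewrite ffunE le_f_bxor. Qed.

Lemma max_fit_is_xor (X : {ffun 'I_mu -> bits n}) :
  max_fit_is f c (xor_all z X) = max_fit_is f c X.
Proof.
rewrite /max_fit_is -!/(below f c _) below_xor.
have [/forallP X_le|] := boolP (below f c X) => //=.
by apply: eq_existsb => j; rewrite ffunE f_bxor.
Qed.

Definition xor_state (st : {ffun 'I_mu -> bits n} * seq R * R) :=
  (xor_all z st.1.1, st.1.2, st.2).

Section OneAlgorithm.
Variables (A : elitist_alg R n mu lam) (j0 : 'I_mu).
Hypothesis A_valid : valid_alg A.

Definition traj_weight (P : pred {ffun 'I_mu -> bits n}) (x0 : {ffun 'I_mu -> bits n})
    (qs : seq {ffun 'I_lam -> bits n}) : R :=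
  let st := run f A x0 qs in if P st.1.1 then st.2 else 0.

Lemma step_xor st q : below f c st.1.1 -> below f c q ->
  step f A (xor_state st) (xor_all z q) = xor_state (step f A st q).
Proof.
case: st => [[pop h] w] /= pop_le q_le.
have comb_xor i : comb (xor_all z pop) (xor_all z q) i = bxor (comb pop q i) z.
  by rewrite /comb; case: split => j; rewrite ffunE.
have /forallP comb_le := etrans (below_comb f c pop q) (introT andP (conj pop_le q_le)).
have -> : (fun i => f (comb (xor_all z pop) (xor_all z q) i)) = (fun i => f (comb pop q i)).
  by apply: funext => i; rewrite comb_xor f_bxor.
rewrite /xor_state /=; congr (_, _, _).
- by apply/ffunP => j; rewrite !ffunE comb_xor.
- by congr (_ ++ _); apply: eq_map => j; rewrite ffunE f_bxor //; exact: forallP q_le j.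
- congr (_ * _); apply: eq_bigr => j _.
  by have [/(_ h j) [_ _ op_xor _] _] := A_valid; rewrite !ffunE -op_xor.
Qed.

Lemma foldl_step_xor st qs : below f c st.1.1 -> all (below f c) qs ->
  foldl (step f A) (xor_state st) (map (xor_all z) qs) = xor_state (foldl (step f A) st qs).
Proof.
elim: qs st => [|q qs IH] st // st_le /andP [q_le qs_le].
transitivity (foldl (step f A) (xor_state (step f A st q)) (map (xor_all z) qs)).
  by rewrite -step_xor.
by rewrite IH // (below_step _ _ j0 A_valid) st_le.
Qed.

Lemma run_xor x0 qs : below f c x0 -> all (below f c) qs ->
  run f A (xor_all z x0) (map (xor_all z) qs) = xor_state (run f A x0 qs).
Proof.
move=> x0_le qs_le; rewrite /run -foldl_step_xor //=.
congr (foldl _ (_, _, _) _); apply: eq_map => j; rewrite ffunE f_bxor //.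
exact: forallP x0_le j.
Qed.

Lemma traj_weight_xor (P : pred {ffun 'I_mu -> bits n}) x0 qs :
  traj_weight (fun X => P X && max_fit_is f c X) (xor_all z x0) (map (xor_all z) qs) =
  traj_weight (fun X => P (xor_all z X) && max_fit_is f c X) x0 qs.
Proof.
have [/andP [x0_le qs_le] | above] := boolP (below f c x0 && all (below f c) qs).
  by rewrite /traj_weight run_xor //= max_fit_is_xor.
have not_max x0' qs' : ~~ (below f c x0' && all (below f c) qs') ->
    max_fit_is f c (run f A x0' qs').1.1 = false.
  by rewrite -(below_run _ _ j0 A_valid); apply: contraNF; case/andP.
rewrite /traj_weight (not_max _ _ above) not_max ?andbF //.
by rewrite below_xor all_map (eq_all (@below_xor _)).
Qed.

End OneAlgorithm.

Variables (Omega : finType) (pw : Omega -> R) (A : Omega -> elitist_alg R n mu lam).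
Variable j0 : 'I_mu.
Hypothesis A_valid : forall om, valid_alg (A om).

Lemma prob_pop_xor t (P : pred {ffun 'I_mu -> bits n}) :
  prob_pop f pw A t (fun X => P X && max_fit_is f c X) =
  prob_pop f pw A t (fun X => P (xor_all z X) && max_fit_is f c X).
Proof.
have xor_tupleK :
    involutive (fun qs : t.-tuple {ffun 'I_lam -> bits n} => map_tuple (xor_all z) qs).
  by move=> qs; apply: val_inj; rewrite /= -map_comp (eq_map (xor_allK z)) map_id.
rewrite /prob_pop; apply: eq_bigr => om _; congr (_ * _).
rewrite (reindex_inj (inv_inj (xor_allK z))); apply: eq_bigr => x0 _.
rewrite (reindex_inj (inv_inj xor_tupleK)); apply: eq_bigr => qs _.
exact: (traj_weight_xor j0).
Qed.

End Symmetry.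

Section Uniformity.
Variables (R : realType) (n mu lam : nat) (f : bits n -> R) (c : R) (I : {set 'I_n}).
Hypothesis f_bxor : forall y : bits n, f y <= c ->
  forall z : bits n, (forall i, i \notin I -> z i = false) -> f (bxor y z) = f y.
Variables (Omega : finType) (pw : Omega -> R) (A : Omega -> elitist_alg R n mu lam).
Hypothesis A_valid : forall om, valid_alg (A om).
Variables (t : nat) (k : 'I_mu).

Local Notation Pr := (prob_pop f pw A t).
Local Notation E := (max_fit_is f c).

Lemma prob_bit_flip i b : i \in I ->
  Pr (fun X => (X k i == b) && E X) = Pr (fun X => (X k i == ~~ b) && E X).
Proof.
move=> iI; pose z : bits n := [ffun j => j == i].
have z_supp j : j \notin I -> z j = false.
  by rewrite ffunE; apply: contraNF => /eqP ->.
rewrite (prob_pop_xor f_bxor z_supp pw k A_valid); congr Pr.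
by apply: funext => X; rewrite !ffunE eqxx addbT -eqb_negLR.
Qed.

Lemma cond_bit_half i b : i \in I -> 0 < Pr E ->
  cond Pr (fun X => X k i == b) E = 1 / 2.
Proof.
move=> iI PrE_gt0.
have PrE : Pr E = Pr (fun X => (X k i == b) && E X) *+ 2.
  rewrite (prob_pop_sum f pw A t (D := predT) (P := fun bb X => (X k i == bb) && E X)).
    by rewrite big_bool; case: b; rewrite mulr2n ?(prob_bit_flip true iI) ?(prob_bit_flip false iI).
  by move=> X; rewrite big_bool; case: (X k i); case: (E X).
have Pb_neq0 : Pr (fun X => (X k i == b) && E X) != 0.
  by apply: contraTneq PrE_gt0 => Pb0; rewrite PrE Pb0 mul0rn ltxx.
by rewrite /cond PrE -[_ *+ 2]mulr_natr invfM mulrA divff // mul1r.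
Qed.

Lemma prob_agree_outside (x : bits n) :
  Pr (fun X => [forall i in ~: I, X k i == x i] && E X) =
  Pr (fun X => (X k == x) && E X) *+ 2 ^ #|I|.
Proof.
pose D := pffun_on false (mem I) (@predT bool).
rewrite (prob_pop_sum f pw A t (D := mem D) (P := fun z X => (X k == bxor x z) && E X)).
  have card_D : #|D| = (2 ^ #|I|)%N by rewrite card_pffun_on -[in RHS]card_bool.
  rewrite -card_D -sumr_const; apply: eq_bigr => z /pffun_on_falseP z_supp.
  rewrite [RHS](prob_pop_xor f_bxor z_supp pw k A_valid); congr Pr.
  by apply: funext => X; rewrite ffunE bxor_eq.
move=> X; pose w := bxor (X k) x.
have eq_w z : (X k == bxor x z) = (z == w) by rewrite eq_sym bxorC bxor_eq.
rewrite (eq_bigr (fun z => (z == w) && E X : nat)) => [|z _]; last by rewrite eq_w.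
rewrite big_mkcond (bigD1 w) //= eqxx big1 ?addn0 => [|z /negbTE ->]; last by case: ifP.
have -> : (w \in D) = [forall i in ~: I, X k i == x i].
  apply/pffun_on_falseP/forall_inP => [supp i | agree i iI].
    by rewrite inE => /supp; rewrite ffunE => /negbT; rewrite negb_add.
  by apply/negbTE; rewrite ffunE negb_add agree ?inE.
by case: ifP.
Qed.

End Uniformity.

Theorem lemma4 (R : realType) (n mu lam : nat) (f : bits n -> R) (c : R)
    (I : {set 'I_n}) :
  (exists y, f y = c) ->
  (forall y : bits n, f y <= c ->
     forall z : bits n, (forall i, i \notin I -> z i = false) ->
       f (bxor y z) = f y) ->
  forall (Omega : finType) (pw : Omega -> R)
         (A : Omega -> elitist_alg R n mu lam),
  (forall om, 0 <= pw om) -> \sum_(om : Omega) pw om = 1 ->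
  (forall om, valid_alg (A om)) ->
  forall (t : nat) (k : 'I_mu),
  let Pr := prob_pop f pw A t in
  let E := max_fit_is f c in
  0 < Pr E ->
  (forall i, i \in I -> forall b : bool,
      cond Pr (fun X => X k i == b) E = 1 / 2) /\
  (forall x : bits n,
      cond Pr (fun X => X k == x) E =
        (\prod_(i in I) cond Pr (fun X => X k i == x i) E) *
        cond Pr (fun X => [forall i in ~: I, X k i == x i]) E).
Proof.
(* Neither the normalisation of [pw] nor [c] being a fitness value is needed:
   conditional probabilities are ratios, and [0 < Pr E] is assumed. *)
move=> _ f_bxor Omega pw A _ _ A_valid t k Pr E PrE_gt0; subst Pr E.
have bit_half i b : i \in I ->
    cond (prob_pop f pw A t) (fun X => X k i == b) (max_fit_is f c) = 1 / 2.
  by move=> iI; exact: (cond_bit_half f_bxor A_valid k b iI PrE_gt0).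
split=> [i iI b | x]; first exact: bit_half.
rewrite (eq_bigr (fun=> 1 / 2)) => [|i iI]; last exact: bit_half.
rewrite prodr_const /cond (prob_agree_outside f_bxor pw A_valid t k x).
rewrite -[_ *+ 2 ^ _]mulr_natr natrX div1r exprVn mulrA [_ * 2%:R ^+ _]mulrC mulKf //.
by rewrite expf_neq0 // pnatr_eq0.
Qed.
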